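(* For all positive integers $n,k$, $$N_B(n,k,k+1)\ \ge\ N_P(n,k,k+1)\ \ge\ \Bigl(k-1+\frac1k\Bigr)n.$$
   Context: Fix a finite field $\mathbb{F}_q$; $[n]=\{1,\dots,n\}$. An $(n,N,k,m)$-batch array code (BAC) over $\mathbb{F}_q$ is an $\mathbb{F}_q$-linear map $\mathcal{C}:\mathbf x=(x_1,\dots,x_n)\in\mathbb{F}_q^n\mapsto(\mathbf c_1,\dots,\mathbf c_m)$ with buckets $\mathbf c_\ell\in\mathbb{F}_q^{N_\ell}$, $N_\ell\ge1$ independent of $\mathbf x$, $\sum_\ell N_\ell=N$, such that for every multiset $\{\{i_1,\dots,i_k\}\}$ of elements of $[n]$ there is a partition of $[m]$ into $k$ sets $R_1,\dots,R_k$ such that for each $j\in[k]$, $x_{i_j}$ is an $\mathbb{F}_q$-linear combination of values $f_\ell(\mathbf c_\ell)$, $\ell\in R_j$, for some linear functionals $f_\ell:\mathbb{F}_q^{N_\ell}\to\mathbb{F}_q$ (independent of $\mathbf x$). An $(n,N,k,m)$-PIR array code is defined identically but the requirement is only imposed for multisets $\{\{i,\dots,i\}\}$. $N_P(n,k,m)$ (resp. $N_B(n,k,m)$) is the minimum $N$ for which an $(n,N,k,m)$-PIR array code (resp. BAC) over $\mathbb{F}_q$ exists. *)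

From HB Require Import structures.
From mathcomp Require Import all_boot all_order all_algebra all_field.
From mathcomp Require Import boolp.
Set Implicit Arguments. Unset Strict Implicit. Unset Printing Implicit Defensive.
Import GRing.Theory.
Local Open Scope ring_scope.

(* An array code with m buckets over F: bucket l has size sizes l (>= 1) and
   content c_l = x *m G l, for the information row vector x : 'rV[F]_n.
   A request is a k-tuple req : 'I_k -> 'I_n (a multiset of k indices).
   A partition of [m] into k nonempty blocks R_1..R_k is encoded by
   r : 'I_m -> 'I_k (R_j = r^-1(j)).  Recovery of x_{req j} from block R_j:
   there are linear functionals f_l : F^{sizes l} -> F (column vectors)
   and coefficients a_l with x_{req j} = sum_{l in R_j} a_l f_l(c_l). *)
Definition recoverable (F : fieldType) (n k m : nat) (sizes : 'I_m -> nat)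
    (G : forall l : 'I_m, 'M[F]_(n, sizes l)) (req : 'I_k -> 'I_n) : Prop :=
  exists r : 'I_m -> 'I_k,
    (forall j : 'I_k, exists l : 'I_m, r l = j) /\
    exists (f : forall l : 'I_m, 'cV[F]_(sizes l)) (a : 'I_m -> F),
      forall (j : 'I_k) (x : 'rV[F]_n),
        x 0 (req j) = \sum_(l < m | r l == j) a l * (x *m G l *m f l) 0 0.

Definition is_array_code (F : fieldType) (n N k m : nat)
    (reqs : ('I_k -> 'I_n) -> Prop) : Prop :=
  exists (sizes : 'I_m -> nat) (G : forall l : 'I_m, 'M[F]_(n, sizes l)),
    (forall l, (0 < sizes l)%N) /\ (\sum_(l < m) sizes l)%N = N /\
    forall req, reqs req -> recoverable G req.

Definition is_BAC (F : fieldType) (n N k m : nat) : Prop :=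
  @is_array_code F n N k m (fun _ => True).

Definition is_PIR (F : fieldType) (n N k m : nat) : Prop :=
  @is_array_code F n N k m (fun req => exists i : 'I_n, forall j, req j = i).

(* minimum N satisfying P (0 if no such N exists) *)
Definition min_nat (P : nat -> Prop) : nat :=
  match pselect (exists N, P N) with
  | left h =>
      @ex_minn (fun N => `[< P N >])
        (let: ex_intro N hN := h in ex_intro _ N (asboolT hN))
  | right _ => 0%N
  end.

Definition N_P (F : fieldType) (n k m : nat) : nat := min_nat (fun N => is_PIR F n N k m).
Definition N_B (F : fieldType) (n k m : nat) : nat := min_nat (fun N => is_BAC F n N k m).

From mathcomp Require Import all_boot all_order all_algebra all_field.
From mathcomp Require Import boolp zify ring.
Set Implicit Arguments. Unset Strict Implicit. Unset Printing Implicit Defensive.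
Import GRing.Theory Num.Theory.
Local Open Scope ring_scope.

(* With k + 1 buckets and k recovery sets, every recovery partition consists
   of one block of two buckets and k - 1 singletons.  Let H_l be the row space
   of the transposed generator of bucket l.  The request {{i, ..., i}} puts the
   unit vector e_i in H_l for all buckets but two, a and b, and in H_a + H_b.
   For each ordered pair (a, b), the unit vectors lying in H_a, in H_b, or in
   H_a + H_b but in neither, number at most
   rank (H_a + H_b) + rank (H_a :&: H_b) = rank H_a + rank H_b.
   Summing over all ordered pairs and all indices i gives
   n (2k(k - 1) + 2) <= 2k N. *)

Local Notation "''e_' i" := (delta_mx (ord0 : 'I_1) i) (at level 8, i at level 2, format "''e_' i").

Lemma sum_units_le_rank (F : fieldType) p n (V : 'M[F]_(p, n)) :
  (\sum_i ('e_i <= V)%MS <= \rank V)%N.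
Proof.
set S := [set i : 'I_n | ('e_i <= V)%MS].
have -> : (\sum_i ('e_i <= V)%MS = #|S|)%N.
  rewrite -sum1_card [RHS]big_mkcond; apply: eq_bigr => i _.
  by rewrite inE; case: (_ <= _)%MS.
pose M := rowsub (@enum_val _ (mem S)) (1%:M : 'M[F]_n).
have rowM j : row j M = 'e_(enum_val j) by rewrite row_rowsub row1.
have sMV : (M <= V)%MS.
  by apply/row_subP => j; rewrite rowM; have := enum_valP j; rewrite inE.
have MMt : M *m M^T = 1%:M.
  apply/matrixP => j j'; rewrite !mxE (bigD1 (enum_val j)) //= big1 ?addr0.
    by rewrite !mxE eqxx mul1r (inj_eq enum_val_inj) eq_sym.
  by move=> t /negbTE ht; rewrite !mxE eq_sym ht mul0r.
apply: leq_trans (mxrankS sMV).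
by rewrite -{1}(mxrank1 F #|S|) -MMt mxrankM_maxl.
Qed.

Lemma sum_ordered_pairs (T : finType) (x : T -> nat) :
  (\sum_a \sum_(b | b != a) (x a + x b) = 2 * (#|T| - 1) * \sum_a x a)%N.
Proof.
have split_diag : (\sum_a \sum_b (x a + x b)
    = \sum_a (x a + x a) + \sum_a \sum_(b | b != a) (x a + x b))%N.
  by rewrite -big_split; apply: eq_bigr => a _; rewrite (bigD1 a).
have all_pairs : (\sum_a \sum_b (x a + x b) = 2 * #|T| * \sum_a x a)%N.
  under eq_bigr => a _ do rewrite big_split /= sum_nat_const.
  by rewrite big_split /= sum_nat_const -big_distrr /= (_ : #|xpredT| = #|T|) //; lia.
move: split_diag; rewrite all_pairs big_split /=.
case: #|T| => [|c]; lia.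
Qed.

Definition jointly_spanned (F : fieldType) p1 p2 n (i : 'I_n)
    (A : 'M[F]_(p1, n)) (B : 'M[F]_(p2, n)) : bool :=
  [&& ('e_i <= A + B)%MS, ~~ ('e_i <= A)%MS & ~~ ('e_i <= B)%MS].

Lemma sum_units_adds_le_rank (F : fieldType) p1 p2 n
    (A : 'M[F]_(p1, n)) (B : 'M[F]_(p2, n)) :
  (\sum_i (('e_i <= A)%MS + ('e_i <= B)%MS + jointly_spanned i A B)
     <= \rank A + \rank B)%N.
Proof.
rewrite -mxrank_sum_cap.
apply: leq_trans (leq_add (sum_units_le_rank (A + B)%MS) (sum_units_le_rank (A :&: B)%MS)).
rewrite -big_split /=; apply: leq_sum => i _.
rewrite /jointly_spanned sub_capmx.
have sAsum : ('e_i <= A)%MS -> ('e_i <= A + B)%MS.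
  by move/submx_trans; apply; apply: addsmxSl.
have sBsum : ('e_i <= B)%MS -> ('e_i <= A + B)%MS.
  by move/submx_trans; apply; apply: addsmxSr.
case: (boolP ('e_i <= A)%MS) => [/sAsum -> | _]; first by case: (_ <= B)%MS.
case: (boolP ('e_i <= B)%MS) => [/sBsum -> // | _].
by case: (_ <= A + B)%MS.
Qed.

Lemma ord_surj_fibers k (r : 'I_k.+1 -> 'I_k) : (forall j, exists l, r l = j) ->
  exists a b, [/\ a != b,
    forall l l', l != a -> l != b -> (r l' == r l) = (l' == l) &
    forall l, (r l == r a) = (l == a) || (l == b)].
Proof.
move=> r_surj.
have /injectivePn [a [b neq_ab r_ab]] : ~~ injectiveb r.
  by apply/injectiveP => /leq_card; rewrite !card_ord ltnn.
have r_inj : {in [set~ a] &, injective r}.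
  apply/imset_injP; have -> : r @: [set~ a] = [set: 'I_k].
    apply/setP => j; rewrite inE; have [l <-] := r_surj j.
    case: (eqVneq l a) => [->|nla]; last by rewrite imset_f // !inE.
    by rewrite r_ab imset_f // !inE eq_sym.
  by rewrite cardsC1 cardsT !card_ord.
exists a, b; split => // [l l' nla nlb | l].
  apply/eqP/eqP => [rl'l | -> //]; case: (eqVneq l' a) => [l'a | nl'a].
    by move: rl'l nlb; rewrite l'a r_ab => /r_inj <-; rewrite ?inE ?eqxx // eq_sym.
  by apply: r_inj; rewrite // !inE.
apply/eqP/orP => [rla | [] /eqP -> //]; case: (eqVneq l a) => [-> | nla]; [by left | right].
by apply/eqP/r_inj; rewrite ?inE // 1?eq_sym // -r_ab.
Qed.

Lemma pair_collapse_count k (u : 'I_k.+1 -> bool) (p : rel 'I_k.+1) a b :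
  (0 < k)%N -> a != b -> (forall l, l != a -> l != b -> u l) ->
  [|| u a, u b | p a b && p b a] ->
  (2 * k * (k - 1) + 2 <= 2 * k * \sum_l u l + \sum_l \sum_(l' | l' != l) p l l')%N.
Proof.
move=> k_gt0 neq_ab u_off_ab u_ab.
have neq_ba : b != a by rewrite eq_sym.
have count_u : (\sum_l u l = u a + u b + (k - 1))%N.
  have all_ones : (\sum_(l < k.+1) 1 = k.+1)%N by rewrite sum1_card card_ord.
  rewrite (bigD1 a) // (bigD1 b) //= in all_ones.
  rewrite (bigD1 a) // (bigD1 b) //= (eq_bigr (fun=> 1%N)) => [|l /andP [nla nlb]].
    by lia.
  by rewrite u_off_ab.
have count_p : (p a b + p b a <= \sum_l \sum_(l' | l' != l) p l l')%N.
  rewrite (bigD1 a) // (bigD1 b) //= [\sum_(l' | l' != a) _](bigD1 b) // [\sum_(l' | l' != b) _](bigD1 a) //=.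
  lia.
move: u_ab count_p; rewrite count_u.
by case: (u a); case: (u b); case: (p a b); case: (p b a) => //=; nia.
Qed.

Lemma recovery_span (F : fieldType) n m (sizes : 'I_m -> nat)
    (G : forall l, 'M[F]_(n, sizes l)) (f : forall l, 'cV[F]_(sizes l))
    (c : 'I_m -> F) (P : pred 'I_m) (i : 'I_n) :
  (forall x : 'rV_n, x 0 i = \sum_(l | P l) c l * (x *m G l *m f l) 0 0) ->
  'e_i = \sum_(l | P l) (c l *: (f l)^T) *m (G l)^T.
Proof.
move=> recover; apply/rowP => t; rewrite summxE.
have := recover (delta_mx 0 t); rewrite !mxE eq_sym /= => ->.
apply: eq_bigr => l _; rewrite -scalemxAl -trmx_mul !mxE; congr (_ * _).
by apply: eq_bigr => s _; rewrite -rowE mxE.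
Qed.

Lemma PIR_request_count (F : fieldType) n k (sizes : 'I_k.+1 -> nat)
    (G : forall l, 'M[F]_(n, sizes l)) (i : 'I_n) :
  (0 < k)%N -> recoverable G (fun _ : 'I_k => i) ->
  (2 * k * (k - 1) + 2 <= 2 * k * \sum_l ('e_i <= (G l)^T)%MS
     + \sum_l \sum_(l' | l' != l) jointly_spanned i (G l)^T (G l')^T)%N.
Proof.
move=> k_gt0 [r [r_surj [f [c recover]]]].
have span j := recovery_span (recover j).
have [a [b [neq_ab fiber_single fiber_pair]]] := ord_surj_fibers r_surj.
apply: (pair_collapse_count k_gt0 neq_ab) => [l nla nlb|].
  by rewrite (span (r l)) (big_pred1 l) ?submxMl // => l'; apply: fiber_single.
have e_in_pair : ('e_i <= (G a)^T + (G b)^T)%MS.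
  rewrite (span (r a)) (eq_bigl _ _ fiber_pair) (bigD1 a) ?eqxx //=.
  rewrite (big_pred1 b) => [|l]; first exact: addmx_sub_adds (submxMl _ _) (submxMl _ _).
  by case: (eqVneq l a) => [->|_] /=; [symmetry; apply: negbTE | rewrite andbT].
have e_in_pair' : ('e_i <= (G b)^T + (G a)^T)%MS by rewrite addsmxC.
rewrite /jointly_spanned e_in_pair e_in_pair'.
by case: ('e_i <= _)%MS; case: ('e_i <= _)%MS.
Qed.

Lemma PIR_length_bound (F : fieldType) n N k : (0 < k)%N -> is_PIR F n N k k.+1 ->
  (n * (k * (k - 1) + 1) <= k * N)%N.
Proof.
move=> k_gt0 [sizes [G [_ [<- recover]]]].
pose H l := (G l)^T.
have ranks_le_sizes : (\sum_l \rank (H l) <= \sum_l sizes l)%N.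
  by apply: leq_sum => l _; apply: rank_leq_row.
have double_count : (\sum_(i < n) (2 * k * (k - 1) + 2) <= 2 * k * \sum_l \rank (H l))%N.
  have two_k : (2 * k = 2 * (#|'I_k.+1| - 1))%N by rewrite card_ord subn1.
  rewrite two_k -sum_ordered_pairs -two_k.
  apply: leq_trans (_ : \sum_(i < n) \sum_l \sum_(l' | l' != l)
      (('e_i <= H l)%MS + ('e_i <= H l')%MS + jointly_spanned i (H l) (H l')) <= _)%N.
    apply: leq_sum => i _; rewrite two_k.
    under eq_bigr do rewrite big_split /=.
    rewrite big_split /= sum_ordered_pairs -two_k.
    exact: PIR_request_count k_gt0 (recover _ (ex_intro _ i (fun=> erefl))).
  rewrite exchange_big; apply: leq_sum => l _.
  rewrite exchange_big; apply: leq_sum => l' _.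
  exact: sum_units_adds_le_rank.
move: double_count; rewrite sum_nat_const card_ord => double_count.
have := leq_mul (leqnn (2 * k)) ranks_le_sizes.
move: double_count; move: (\sum_l _) (\sum_l _) => R S; nia.
Qed.

Lemma min_natP (P : nat -> Prop) : (exists N, P N) ->
  P (min_nat P) /\ forall N, P N -> (min_nat P <= N)%N.
Proof.
rewrite /min_nat; case: pselect => [exP _ | //].
case: ex_minnP => N /asboolP PN N_min; split => // N' /asboolP; exact: N_min.
Qed.

Lemma BAC_is_PIR (F : fieldType) n N k m : is_BAC F n N k m -> is_PIR F n N k m.
Proof.
case=> sizes [G [sizes_gt0 [sum_sizes recover]]].
by exists sizes, G; do 2!split => //; move=> req _; apply: recover.
Qed.

Lemma replication_is_BAC (F : fieldType) n k : (0 < n)%N ->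
  is_BAC F n (k.+2 * n) k.+1 k.+2.
Proof.
move=> n_gt0; exists (fun _ => n), (fun _ => 1%:M); split => //; split.
  by rewrite sum_nat_const card_ord.
move=> req _.
pose lower (j : 'I_k.+1) : 'I_k.+2 := widen_ord (leqnSn _) j.
have lowerK j : inord (lower j) = j by apply: val_inj; rewrite /= inordK.
exists (fun l => inord l); split; first by move=> j; exists (lower j).
exists (fun l => delta_mx (req (inord l)) 0), (fun l => (l < k.+1)%N%:R) => j x.
rewrite (bigD1 (lower j)) /=; last by rewrite lowerK.
rewrite big1 ?addr0 => [|l /andP [/eqP <- neq_l]].
  by rewrite lowerK ltn_ord mul1r mulmx1 -colE mxE.
case: (ltnP l k.+1) => [l_lt | _]; last by rewrite mul0r.
by case/eqP: neq_l; apply: val_inj; rewrite /= inordK.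
Qed.

Theorem corollary3p3 (F : finFieldType) (n k : nat) :
  (0 < n)%N -> (0 < k)%N ->
  (N_P F n k k.+1 <= N_B F n k k.+1)%N /\
  ((k%:R - 1 + k%:R^-1) * n%:R <= (N_P F n k k.+1)%:R :> rat).
Proof.
move=> n_gt0 k_gt0.
have BAC_ex : exists N, is_BAC F n N k k.+1.
  by case: k k_gt0 => // k _; exists (k.+2 * n)%N; apply: replication_is_BAC.
have PIR_ex : exists N, is_PIR F n N k k.+1.
  by have [N /BAC_is_PIR] := BAC_ex; exists N.
have [BAC_NB _] := min_natP BAC_ex.
have [PIR_NP NP_min] := min_natP PIR_ex.
split; first exact/NP_min/BAC_is_PIR.
have k_pos : (0 : rat) < k%:R by rewrite ltr0n.
have bound := PIR_length_bound k_gt0 PIR_NP.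
rewrite -(ler_nat rat) natrM natrD !natrM natrB // in bound.
rewrite -(ler_pM2l k_pos).
suff -> : k%:R * ((k%:R - 1 + k%:R^-1) * n%:R) = n%:R * (k%:R * (k%:R - 1%:R) + 1) :> rat.
  exact: bound.
by field; rewrite pnatr_eq0 -lt0n.
Qed.
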